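(* Let $G$ be the central product of normal subgroups $H,K$ ($G=HK$, $[H,K]=1$), $A=H\cap K$, $D$ a divisible abelian group with trivial action. Let $\theta':\operatorname{H}^2(G,D)\to \operatorname{H}^2(H,D)\oplus\operatorname{H}^2(K,D)\oplus\operatorname{Hom}(H\otimes K,D)$ and $\theta:\operatorname{H}^2(G/A,D)\to \operatorname{H}^2(H/A,D)\oplus\operatorname{H}^2(K/A,D)\oplus\operatorname{Hom}(H/A\otimes K/A,D)$ be as defined in the context ($\theta$ is an isomorphism). Let $(\operatorname{tra},\operatorname{tra},0):\operatorname{Hom}(A\cap H',D)\oplus\operatorname{Hom}(A\cap K',D)\to \operatorname{H}^2(H/A,D)\oplus\operatorname{H}^2(K/A,D)\oplus\operatorname{Hom}(H/A\otimes K/A,D)$, where the first $\operatorname{tra}$ is the transgression for the central extension $1\to A\to H\to H/A\to 1$ restricted to $\operatorname{Hom}(A\cap H',D)$ and the second is the transgression for $1\to A\to K\to K/A\to 1$ restricted to $\operatorname{Hom}(A\cap K',D)$. Then $$\operatorname{Ker}(\theta')=\{\inf(\eta)\mid \eta\in \theta^{-1}(\operatorname{Im}(\operatorname{tra},\operatorname{tra},0))\},$$ where $\inf:\operatorname{H}^2(G/A,D)\to\operatorname{H}^2(G,D)$ is inflation.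
   Context: $X\otimes Y$ denotes the abelian tensor product $X/X'\otimes_{\mathbb{Z}}Y/Y'$. Cohomology classes are represented by 2-cocycles with values in $D$ (written additively). The map $\theta'=(\operatorname{res}^G_H,\operatorname{res}^G_K,\nu)$, where for $\xi\in\operatorname{H}^2(G,D)$ represented by a 2-cocycle $f$, $\nu(\xi)\in\operatorname{Hom}(H\otimes K,D)$ is given by $\nu(\xi)(hH'\otimes kK')=f(h,k)-f(k,h)$ for $h\in H,k\in K$. Similarly, with $\bar G=G/A$, $\bar H=H/A$, $\bar K=K/A$, $\theta=(\operatorname{res}^{\bar G}_{\bar H},\operatorname{res}^{\bar G}_{\bar K},\nu_1)$ with $\nu_1(\xi)(h\bar H'\otimes k\bar K')=f(h,k)-f(k,h)$ for $h\in\bar H,k\in\bar K$; since $\bar H\cap\bar K=1$, $\theta$ is an isomorphism. *)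

From HB Require Import structures.
From mathcomp Require Import all_boot all_order all_algebra all_fingroup all_solvable.
From mathcomp Require Import commutator quotient.
Set Implicit Arguments. Unset Strict Implicit. Unset Printing Implicit Defensive.
Import GRing.Theory.

Definition divisible (D : zmodType) : Prop :=
  forall (d : D) (n : nat), (0 < n)%N -> exists e : D, (e *+ n)%R = d.

Definition cocycle2 (gT : finGroupType) (D : zmodType) (G : {set gT})
  (f : gT -> gT -> D) : Prop :=
  forall x y z, x \in G -> y \in G -> z \in G ->
    (f x y + f (x * y)%g z = f y z + f x (y * z)%g)%R.

Definition coboundary2 (gT : finGroupType) (D : zmodType) (G : {set gT})
  (f : gT -> gT -> D) : Prop :=
  exists g : gT -> D, forall x y, x \in G -> y \in G ->
    f x y = (g x + g y - g (x * y)%g)%R.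

Definition cohomologous2 (gT : finGroupType) (D : zmodType) (G : {set gT})
  (f1 f2 : gT -> gT -> D) : Prop :=
  coboundary2 G (fun x y => (f1 x y - f2 x y)%R).

Definition ishom (gT : finGroupType) (D : zmodType) (A : {set gT})
  (psi : gT -> D) : Prop :=
  forall a b, a \in A -> b \in A -> psi (a * b)%g = (psi a + psi b)%R.

(* Transgression cocycle for the central extension 1 -> A -> L -> L/A -> 1,
   computed with the section x |-> repr x. *)
Definition tra_cocycle (gT : finGroupType) (D : zmodType) (A : {group gT})
  (psi : gT -> D) : coset_of A -> coset_of A -> D :=
  fun x y => psi (repr x * repr y * (repr (x * y)%g)^-1)%g.

(* The class c in H^2(L/A, D) lies in the image of the transgression
   restricted to Hom(A :&: L', D): c = tra(phi) for some phi in
   Hom(A :&: L', D), where tra(phi) is computed as the transgression of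
   an extension psi in Hom(A, D) of phi. *)
Arguments cocycle2 {gT D}.
Arguments coboundary2 {gT D}.
Arguments cohomologous2 {gT D}.
Arguments ishom {gT D}.
Arguments tra_cocycle {gT D}.

Definition in_tra_image (gT : finGroupType) (D : zmodType) (A L : {group gT})
  (c : coset_of A -> coset_of A -> D) : Prop :=
  exists phi : gT -> D, ishom (A :&: (L^`(1))%g) phi /\
    exists psi : gT -> D, [/\ ishom A psi, {in A :&: (L^`(1))%g, psi =1 phi}
      & cohomologous2 (L / A)%g c (tra_cocycle A psi)].

Definition inflation (gT : finGroupType) (D : zmodType) (A : {group gT})
  (eta : coset_of A -> coset_of A -> D) : gT -> gT -> D :=
  fun x y => eta (coset A x) (coset A y).

Definition in_ker_theta' (gT : finGroupType) (D : zmodType) (H K : {set gT})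
  (f : gT -> gT -> D) : Prop :=
  [/\ coboundary2 H f, coboundary2 K f &
      forall h k, h \in H -> k \in K -> (f h k - f k h)%R = 0%R].

Arguments in_tra_image {gT D}.
Arguments inflation {gT D}.
Arguments in_ker_theta' {gT D}.

From HB Require Import structures.
From mathcomp Require Import all_boot all_order all_algebra all_fingroup all_solvable.
From mathcomp Require Import commutator quotient ring.
Set Implicit Arguments. Unset Strict Implicit. Unset Printing Implicit Defensive.
Import GRing.Theory.

(* Since A = H :&: K is central in G = H * K, the skew part x |-> f x a - f a x
   (a in A) of a cocycle f is additive in x. For f in Ker(theta') it vanishes on H
   and on K, hence on G, and f can then be changed by a coboundary so that it
   vanishes on G x A and on A x G; such a cocycle is inflated from the cocycle
   eta u v := f (repr u) (repr v) of G / A. Writing f = delta beta on H, vanishing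
   on H x A makes beta a homomorphism on A whose transgression is eta on H / A
   (likewise for K). Conversely, inflation kills transgressions, and on commuting
   pairs only the skew part of a cocycle is seen, which coboundaries do not change. *)

(* [ring] needs a commutative ring: identities in the abelian group D are
   decided in the idealization int * D, in which D squares to zero. *)
Section Idealization.
Local Open Scope ring_scope.
Variable D : zmodType.

Definition idealization := (int * D)%type.
HB.instance Definition _ := GRing.Zmodule.on idealization.

Definition idealization_mul (x y : idealization) : idealization :=
  (x.1 * y.1, x.2 *~ y.1 + y.2 *~ x.1).

Lemma idealization_mulA : associative idealization_mul.
Proof.
case=> n d [m e] [p k]; congr (_, _); first by rewrite mulrA.
rewrite /= !mulrzDl -!mulrzA -!addrA; congr (_ + _).
by rewrite addrC [m * n]mulrC [p * n]mulrC addrC.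
Qed.

Lemma idealization_mulC : commutative idealization_mul.
Proof. by case=> n d [m e]; rewrite /idealization_mul /= mulrC addrC. Qed.

Lemma idealization_mul1 : left_id (1, 0) idealization_mul.
Proof. by case=> n d; rewrite /idealization_mul /= mul1r mul0rz mulr1z add0r. Qed.

Lemma idealization_mulDl : left_distributive idealization_mul +%R.
Proof.
case=> n d [m e] [p k]; congr (_, _); first by rewrite /= mulrDl.
by rewrite /= mulrzDl mulrzDr addrACA.
Qed.

HB.instance Definition _ := GRing.Zmodule_isComNzRing.Build idealization
  idealization_mulA idealization_mulC idealization_mul1 idealization_mulDl isT.

Definition idealization_in (d : D) : idealization := (0, d).

Lemma idealization_in_is_zmod_morphism : zmod_morphism idealization_in.
Proof. by []. Qed.

HB.instance Definition _ := GRing.isZmodMorphism.Build D idealization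
  idealization_in idealization_in_is_zmod_morphism.

Lemma idealization_in_inj : injective idealization_in.
Proof. by move=> d e []. Qed.

Lemma eq_of_subr_eq (x y l r : D) : l = r -> x - y = l - r -> x = y.
Proof. by move=> -> /eqP; rewrite subrr subr_eq0 => /eqP. Qed.

End Idealization.

Ltac zmod_ring := apply: idealization_in_inj; ring.

Tactic Notation "zmod_ring" "using" constr(E) :=
  apply: (eq_of_subr_eq E); zmod_ring.
Tactic Notation "zmod_ring" "using" constr(E1) "," constr(E2) :=
  zmod_ring using (congr2 +%R E1 E2).
Tactic Notation "zmod_ring" "using" constr(E1) "," constr(E2) "," constr(E3) :=
  zmod_ring using (congr2 +%R E1 (congr2 +%R E2 E3)).

Local Open Scope ring_scope.
Local Open Scope group_scope.

Section Cocycles.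
Variables (gT : finGroupType) (D : zmodType).
Implicit Types (G : {set gT}) (f : gT -> gT -> D) (g : gT -> D).

Definition cobound g x y : D := g x + g y - g (x * y).

Lemma coboundaryS G1 G2 f : G1 \subset G2 -> coboundary2 G2 f -> coboundary2 G1 f.
Proof.
by move=> sG12 [g fg]; exists g => x y /(subsetP sG12) xG /(subsetP sG12); apply: fg.
Qed.

Lemma coboundary_cohomologous G f1 f2 :
  cohomologous2 G f1 f2 -> coboundary2 G f2 -> coboundary2 G f1.
Proof.
move=> [g1 fg1] [g2 fg2]; exists (fun x => g1 x + g2 x) => x y xG yG.
by zmod_ring using (fg1 x y xG yG), (fg2 x y xG yG).
Qed.

Lemma cohomologous_sym G f1 f2 : cohomologous2 G f1 f2 -> cohomologous2 G f2 f1.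
Proof.
by move=> [g fg]; exists (fun x => - g x) => x y xG yG; zmod_ring using (esym (fg x y xG yG)).
Qed.

Lemma cocycle_subr_cobound G f g :
  cocycle2 G f -> cocycle2 G (fun x y => f x y - cobound g x y).
Proof.
move=> fcoc x y z xG yG zG; rewrite /cobound mulgA.
by zmod_ring using (fcoc x y z xG yG zG).
Qed.

Lemma cohomologous_skew G f1 f2 x y :
    cohomologous2 G f1 f2 -> x \in G -> y \in G -> commute x y ->
  f1 x y - f1 y x = f2 x y - f2 y x.
Proof.
move=> [g fg] xG yG cxy; have Exy := fg x y xG yG; rewrite cxy in Exy.
by zmod_ring using Exy, (esym (fg y x yG xG)).
Qed.

Lemma coboundary_comm G f x y :
  coboundary2 G f -> x \in G -> y \in G -> commute x y -> f x y = f y x.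
Proof. by move=> [g fg] xG yG cxy; rewrite fg // fg // cxy; zmod_ring. Qed.

Lemma cocycle_skew_morph G f a x y :
    cocycle2 G f -> a \in G -> x \in G -> y \in G -> commute a x -> commute a y ->
  f (x * y) a - f a (x * y) = (f x a - f a x) + (f y a - f a y).
Proof.
move=> fcoc aG xG yG cax cay.
have Exya := fcoc x y a xG yG aG; have Exay := fcoc x a y xG aG yG.
rewrite -cay in Exya; rewrite -cax in Exay.
by zmod_ring using Exya, (esym Exay), (fcoc a x y aG xG yG).
Qed.

End Cocycles.

Section CentralQuotient.
Variables (gT : finGroupType) (D : zmodType) (A L : {group gT}).
Implicit Types (f F : gT -> gT -> D) (g psi : gT -> D) (e : coset_of A -> coset_of A -> D).

Definition quo_cocycle F : coset_of A -> coset_of A -> D :=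
  fun u v => F (repr u) (repr v).

Lemma repr_cosetP x : x \in 'N(A) -> exists2 a, a \in A & repr (coset A x) = a * x.
Proof.
by move=> Nx; apply: kercoset_rcoset; rewrite ?repr_coset_norm ?coset_reprK.
Qed.

Lemma repr_cosetM (u v : coset_of A) :
  exists2 a, a \in A & repr u * repr v = a * repr (u * v).
Proof.
apply: kercoset_rcoset; rewrite ?groupM ?repr_coset_norm //.
by rewrite coset_morphM ?repr_coset_norm // !coset_reprK.
Qed.

Hypotheses (sAL : A \subset L) (cAL : L \subset 'C(A)).

Lemma central_normal : A <| L.
Proof. by rewrite /normal sAL (subset_trans cAL (cent_sub A)). Qed.

Let nAL := normal_norm central_normal.

Lemma commute_central x a : x \in L -> a \in A -> commute x a.
Proof. by move=> xL aA; apply: (centsP cAL). Qed.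

Lemma repr_quotient u : u \in L / A -> repr u \in L.
Proof.
move=> uL; rewrite -(quotientGK central_normal); apply/morphpreP.
by rewrite repr_coset_norm /= coset_reprK.
Qed.

Lemma repr_coset_central x : x \in L -> exists2 a, a \in A & repr (coset A x) = x * a.
Proof.
move=> xL; have [a aA ->] := repr_cosetP (subsetP nAL x xL).
by exists a => //; apply/esym/commute_central.
Qed.

Lemma repr_quotientM u v : u \in L / A -> v \in L / A ->
  exists2 a, a \in A & repr u * repr v = repr (u * v) * a.
Proof.
move=> uL vL; have [a aA ->] := repr_cosetM u v.
by exists a => //; apply/esym/commute_central; rewrite ?repr_quotient ?groupM.
Qed.

Lemma inflation_cohomologous e1 e2 :
  cohomologous2 (L / A) e1 e2 -> cohomologous2 L (inflation A e1) (inflation A e2).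
Proof.
move=> [c ce]; exists (fun x => c (coset A x)) => x y xL yL.
by rewrite /inflation morphM ?(subsetP nAL) //; apply: ce; apply: mem_quotient.
Qed.

Lemma ishom_mulV psi a b :
  ishom A psi -> a \in A -> b \in A -> psi (a * b^-1) = (psi a - psi b)%R.
Proof.
move=> hpsi aA bA; have := hpsi (a * b^-1) b (groupM aA (groupVr bA)) bA.
by rewrite mulgKV => E; zmod_ring using (esym E).
Qed.

Lemma inflation_tra_coboundary psi :
  ishom A psi -> coboundary2 L (inflation A (tra_cocycle A psi)).
Proof.
move=> hpsi; exists (fun x => psi (repr (coset A x) * x^-1)) => x y xL yL /=.
rewrite /inflation /tra_cocycle -coset_morphM ?(subsetP nAL) //.
have [a aA ->] := repr_cosetP (subsetP nAL x xL).
have [b bA ->] := repr_cosetP (subsetP nAL y yL).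
have [d dA ->] := repr_cosetP (subsetP nAL _ (groupM xL yL)).
have -> : a * x * (b * y) * (d * (x * y))^-1 = a * b * d^-1.
  rewrite [a * x * _]mulgA -(mulgA a x b) (commute_central xL bA) mulgA.
  by rewrite -(mulgA (a * b) x y) invMg (mulgA (a * b * (x * y))) mulgK.
by rewrite !mulgK ishom_mulV ?groupM // hpsi.
Qed.

Lemma tra_image_inflation_coboundary e :
  in_tra_image A L e -> coboundary2 L (inflation A e).
Proof.
move=> [_ [_ [psi [hpsi _ e_tra]]]].
exact: coboundary_cohomologous (inflation_cohomologous e_tra) (inflation_tra_coboundary hpsi).
Qed.

Section Descent.
Variable F : gT -> gT -> D.
Hypotheses (Fcoc : cocycle2 L F) (FLA : {in L & A, forall x a, F x a = 0%R})
  (FAL : {in A & L, forall a x, F a x = 0%R}).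

Lemma cocycle_kerr x y a : x \in L -> y \in L -> a \in A -> F x (y * a) = F x y.
Proof.
move=> xL yL aA; have := Fcoc xL yL (subsetP sAL a aA).
by rewrite [F (x * y) a]FLA ?groupM // [F y a]FLA // => E; zmod_ring using (esym E).
Qed.

Lemma cocycle_kerl x y a : x \in L -> y \in L -> a \in A -> F (x * a) y = F x y.
Proof.
move=> xL yL aA; have := Fcoc xL (subsetP sAL a aA) yL.
rewrite [F x a]FLA // [F a y]FAL // -(commute_central yL aA) cocycle_kerr // => E.
by zmod_ring using E.
Qed.

Lemma inflation_quo_cocycle x y :
  x \in L -> y \in L -> inflation A (quo_cocycle F) x y = F x y.
Proof.
move=> xL yL; rewrite /inflation /quo_cocycle.
have [a aA ->] := repr_coset_central xL; have [b bA ->] := repr_coset_central yL.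
by rewrite cocycle_kerl ?cocycle_kerr ?groupM ?(subsetP sAL b).
Qed.

Lemma quo_cocycle_cocycle : cocycle2 (L / A) (quo_cocycle F).
Proof.
move=> u v w uL vL wL; rewrite /quo_cocycle.
have [a aA Euv] := repr_quotientM uL vL; have [b bA Evw] := repr_quotientM vL wL.
have := Fcoc (repr_quotient uL) (repr_quotient vL) (repr_quotient wL).
by rewrite Euv Evw cocycle_kerl ?cocycle_kerr ?repr_quotient ?groupM.
Qed.

End Descent.

Lemma quo_cocycle_tra_image F :
  {in L & A, forall x a, F x a = 0%R} -> coboundary2 L F -> in_tra_image A L (quo_cocycle F).
Proof.
move=> FLA [beta Fbeta].
have betaM x a : x \in L -> a \in A -> beta (x * a) = (beta x + beta a)%R.
  move=> xL aA; have := Fbeta x a xL (subsetP sAL a aA).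
  by rewrite FLA // => E; zmod_ring using E.
pose psi a := (- beta a)%R.
have psiM : ishom A psi.
  by move=> a b aA bA; rewrite /psi betaM ?(subsetP sAL a aA) //; zmod_ring.
exists psi; split; first by move=> a b /setIP[aA _] /setIP[bA _]; apply: psiM.
exists psi; split=> //; exists (fun u : coset_of A => beta (repr u)) => u v uL vL /=.
have [a aA Euv] := repr_quotientM uL vL; have ruvL := repr_quotient (groupM uL vL).
rewrite /quo_cocycle /tra_cocycle Fbeta ?repr_quotient // Euv betaM //.
by rewrite (commute_central ruvL aA) mulgK /psi; zmod_ring.
Qed.

Lemma cocycle_normalize f alpha :
    cocycle2 L f -> {in A &, forall a b, f a b = cobound alpha a b} ->
    {in L & A, forall x a, f x a = f a x} ->
  exists g, {in L & A, forall x a, f x a = cobound g x a /\ f a x = cobound g a x}.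
Proof.
move=> fcoc falpha fsym; pose r x := repr (coset A x).
(* The constant f 1 1 = f 1 a makes g agree with alpha on A. *)
pose g x := alpha ((r x)^-1 * x) - f (r x) ((r x)^-1 * x) + f 1 1.
suff fg x a : x \in L -> a \in A -> f x a = cobound g x a.
  exists g => x a xL aA; split; first exact: fg.
  by rewrite -fsym // fg // /cobound (commute_central xL aA) [g a + _]addrC.
move=> xL aA; have aL := subsetP sAL a aA.
have [c cA rx] := repr_coset_central xL; have cL := subsetP sAL c cA.
have rxa : r (x * a) = x * c by rewrite /r coset_kerr.
have ra : r a = 1 by rewrite /r coset_id // repr_coset1.
have Ecocycle := fcoc (x * c) c^-1 a (groupM xL cL) (groupVr cL) aL.
have Ealpha := falpha c^-1 a (groupVr cA) aA.
have E1 := fcoc 1 1 a (group1 L) (group1 L) aL.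
rewrite mulgK in Ecocycle; rewrite /cobound in Ealpha; rewrite !mul1g in E1.
rewrite /cobound /g rxa ra /r rx invg1 mul1g invMg mulgKV -mulgA mulKg.
by zmod_ring using Ecocycle, Ealpha, (esym E1).
Qed.

End CentralQuotient.

Arguments quo_cocycle {gT D} A F _ _.

Section CentralProduct.
Variables (gT : finGroupType) (D : zmodType) (G H K A : {group gT}).
Hypotheses (defG : H * K = G :> {set gT}) (cHK : [~: H, K] = 1) (defA : A :=: H :&: K).
Implicit Types f F : gT -> gT -> D.

Let sHG : H \subset G. Proof. by rewrite -defG mulG_subl. Qed.
Let sKG : K \subset G. Proof. by rewrite -defG mulG_subr. Qed.
Let sAH : A \subset H. Proof. by rewrite defA subsetIl. Qed.
Let sAK : A \subset K. Proof. by rewrite defA subsetIr. Qed.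

Lemma central_product_commute h k : h \in H -> k \in K -> commute h k.
Proof.
have /centsP cHK' : H \subset 'C(K) by apply/commG1P.
by move=> hH kK; apply: cHK'.
Qed.

Lemma central_product_cent : G \subset 'C(A).
Proof.
have cHK' : H \subset 'C(K) by apply/commG1P.
rewrite -defG mul_subG //; first exact: subset_trans cHK' (centS sAK).
by rewrite centsC in cHK'; apply: subset_trans cHK' (centS sAH).
Qed.

Let cAG := central_product_cent.
Let cAH := subset_trans sHG cAG.
Let cAK := subset_trans sKG cAG.
Let sAG := subset_trans sAH sHG.

Lemma central_product_cocycle_comm f :
  cocycle2 G f -> coboundary2 H f -> coboundary2 K f -> {in G & A, forall x a, f x a = f a x}.
Proof.
move=> fcoc fH fK x a; rewrite -defG => /mulsgP[h k hH kK ->] aA.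
have [aH aK] := (subsetP sAH a aA, subsetP sAK a aA).
have [hG kG] := (subsetP sHG h hH, subsetP sKG k kK).
have [cha cka] : commute h a /\ commute k a by split; apply: (centsP cAG).
have := cocycle_skew_morph fcoc (subsetP sHG a aH) hG kG (esym cha) (esym cka).
rewrite (coboundary_comm fH hH aH cha) (coboundary_comm fK kK aK cka) !subrr addr0.
by move/eqP; rewrite subr_eq0 => /eqP.
Qed.

Lemma ker_theta'_cohomologous f1 f2 :
  cohomologous2 G f1 f2 -> in_ker_theta' H K f2 -> in_ker_theta' H K f1.
Proof.
move=> f12 [f2H f2K f2HK]; split.
- exact: coboundary_cohomologous (coboundaryS sHG f12) f2H.
- exact: coboundary_cohomologous (coboundaryS sKG f12) f2K.
move=> h k hH kK; rewrite (cohomologous_skew f12 (subsetP sHG h hH) (subsetP sKG k kK)).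
  exact: f2HK.
exact: central_product_commute.
Qed.

Lemma inflation_ker_theta' (e : coset_of A -> coset_of A -> D) :
    in_tra_image A H e -> in_tra_image A K e ->
    (forall u v, u \in H / A -> v \in K / A -> (e u v - e v u)%R = 0%R) ->
  in_ker_theta' H K (inflation A e).
Proof.
move=> eH eK e_skew; split.
- exact: (tra_image_inflation_coboundary sAH cAH eH).
- exact: (tra_image_inflation_coboundary sAK cAK eK).
by move=> h k hH kK; apply: e_skew; apply: mem_quotient.
Qed.

Lemma ker_theta'_normalize f : cocycle2 G f -> in_ker_theta' H K f ->
  exists F, [/\ cohomologous2 G f F, cocycle2 G F, in_ker_theta' H K F,
                {in G & A, forall x a, F x a = 0%R} & {in A & G, forall a x, F a x = 0%R}].
Proof.
move=> fcoc fker; have [fH fK _] := fker; have [alpha falpha] := fH.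
have [g fg] := cocycle_normalize sAG cAG fcoc
  (fun a b aA bA => falpha a b (subsetP sAH a aA) (subsetP sAH b bA))
  (central_product_cocycle_comm fcoc fH fK).
pose F x y := (f x y - cobound g x y)%R.
have fF : cohomologous2 G f F by exists g => x y _ _; rewrite /F /cobound; zmod_ring.
exists F; split=> //.
- exact: cocycle_subr_cobound.
- exact: ker_theta'_cohomologous (cohomologous_sym fF) fker.
- by move=> x a xG aA; have [fxa _] := fg x a xG aA; rewrite /F fxa subrr.
- by move=> a x aA xG; have [_ fax] := fg x a xG aA; rewrite /F fax subrr.
Qed.

End CentralProduct.

Theorem lemma3p2 (gT : finGroupType) (D : zmodType) (G H K A : {group gT})
  (nHG : (H <| G)%g) (nKG : (K <| G)%g) (defG : (H * K)%g = G :> {set gT})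
  (cHK : ([~: H, K] = 1)%g) (defA : (A :=: H :&: K)%g) (divD : divisible D)
  (f : gT -> gT -> D) (fcoc : cocycle2 G f) :
  in_ker_theta' H K f <->
  exists eta : coset_of A -> coset_of A -> D,
    [/\ cocycle2 (G / A)%g eta,
        (* theta(eta) in Im(tra, tra, 0): *)
        in_tra_image A H eta, in_tra_image A K eta,
        (forall x y, x \in (H / A)%g -> y \in (K / A)%g ->
           (eta x y - eta y x)%R = 0%R)
      & cohomologous2 G f (inflation A eta)].
Proof.
(* nHG and nKG follow from defG and cHK; divD is what extends a homomorphism
   on A :&: L^`(1) to A, an extension that in_tra_image already provides. *)
have sHG : H \subset G by rewrite -defG mulG_subl.
have sKG : K \subset G by rewrite -defG mulG_subr.
have [sAH sAK] : A \subset H /\ A \subset K by rewrite defA subsetIl subsetIr.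
have sAG := subset_trans sAH sHG.
have cAG := central_product_cent defG cHK defA.
have [cAH cAK] := (subset_trans sHG cAG, subset_trans sKG cAG).
split=> [fker | [e [_ eH eK e_skew f_e]]]; last first.
  apply: (ker_theta'_cohomologous defG cHK f_e).
  exact: (inflation_ker_theta' defG cHK defA eH eK e_skew).
have [F [fF Fcoc [FH FK FHK] FGA FAG]] := ker_theta'_normalize defG cHK defA fcoc fker.
have FLA (L : {group gT}) : L \subset G -> {in L & A, forall x a, F x a = 0%R}.
  by move=> sLG x a xL; apply: FGA; apply: (subsetP sLG).
exists (quo_cocycle A F); split.
- exact: (quo_cocycle_cocycle sAG cAG Fcoc FGA FAG).
- exact: (quo_cocycle_tra_image sAH cAH (FLA H sHG) FH).
- exact: (quo_cocycle_tra_image sAK cAK (FLA K sKG) FK).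
- by move=> u v uH vK; apply: FHK; apply: repr_quotient.
have [g fg] := fF; exists g => x y xG yG.
by rewrite (inflation_quo_cocycle sAG cAG Fcoc FGA FAG) //; apply: fg.
Qed.
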